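(* Let $f(x)=\dfrac{1}{x^2-1}$, viewed as a map on $\mathbb{C}\setminus\{-1,1\}$, and consider the difference equation $x_{n+1}=f(x_n)$ over $\mathbb{C}$. Define, for $x\in\mathbb{C}\setminus\{0\}$, $$h_+(x)=\sqrt{\tfrac1x+1},\qquad h_-(x)=-\sqrt{\tfrac1x+1},$$ where $\sqrt{\cdot}$ denotes the principal branch of the complex square root. For $n\geq1$ and letters $a_1,\ldots,a_n\in\{h_+,h_-\}$, write $a_1\ldots a_n$ for the number $a_1\circ a_2\circ\cdots\circ a_n(1)$. Then: (i) the unique point $x\in\mathbb{C}$ with $f(x)=-1$ is $x=0$, and $0$ has no preimage under $f$; (ii) the points $x$ with $f^m(x)=1$ for some $m\geq1$ (all intermediate iterates being defined) are exactly the numbers $a_1\ldots a_n$ with $n\geq1$ and $a_i\in\{h_+,h_-\}$; (iii) every such word $a_1\ldots a_n$ is well defined in $\mathbb{C}$, that is, all the intermediate compositions are nonzero, and in particular $a_1\ldots a_n\neq0$; (iv) the representation is unique: if $a_1\ldots a_n=b_1\ldots b_m$ with all $a_i,b_j\in\{h_+,h_-\}$, then $n=m$ and $a_i=b_i$ for $i=1,\ldots,n$. Consequently the forbidden set of the equation over $\mathbb{C}$ is $$\mathcal F=\{-1,0,1\}\cup\{a_1\ldots a_n:\ n\in\mathbb{N},\ n\geq1,\ a_i\in\{h_+,h_-\}\}.$$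
   Context: For the difference equation $x_{n+1}=f(x_n)$ with $f$ defined on $A=\mathbb{C}\setminus\{-1,1\}$ (the poles of $f$ being $\pm1$), the forbidden set $\mathcal F$ is the set of initial conditions $x_0\in\mathbb{C}$ for which some iterate $x_n$ ($n\geq0$) of the recursion lands on a pole $\pm1$, so that $x_{n+1}$ is not defined; it includes the poles themselves. The principal square root of $w\neq0$ is the square root with argument in $(-\pi/2,\pi/2]$, and $\sqrt0=0$. *)

(* complex numbers are R[i] (mathcomp-real-closed) over a
   real number type R : realType (mathcomp-analysis); sqrtc is the principal
   square root (real part >= 0, argument in (-pi/2, pi/2]). *)
From HB Require Import structures.
From mathcomp Require Import all_boot all_order all_algebra.
From mathcomp Require Import reals.
From mathcomp Require Import complex.
Set Implicit Arguments. Unset Strict Implicit. Unset Printing Implicit Defensive.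
Import Order.TTheory GRing.Theory Num.Theory.
Local Open Scope ring_scope.
Local Open Scope complex_scope.

Section Defs.
Variable R : realType.

Definition fmap (x : R[i]) : R[i] := (x ^+ 2 - 1)^-1.

Definition is_pole (x : R[i]) : Prop := x = 1 \/ x = -1.

(* the iterates x_0, ..., x_{m-1} are all defined and not poles,
   so that x_0, ..., x_m are all defined *)
Definition defined_upto (x : R[i]) (m : nat) : Prop :=
  forall k, (k < m)%N -> ~ is_pole (iter k fmap x).

Definition forbidden (x : R[i]) : Prop :=
  exists n : nat, defined_upto x n /\ is_pole (iter n fmap x).

Definition hp (x : R[i]) : R[i] := sqrtc (x^-1 + 1).
Definition hm (x : R[i]) : R[i] := - sqrtc (x^-1 + 1).
Definition hlet (b : bool) : R[i] -> R[i] := if b then hp else hm.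

Definition word (w : seq bool) : R[i] := foldr hlet 1 w.
End Defs.

From HB Require Import structures.
From mathcomp Require Import all_boot all_order all_algebra.
From mathcomp Require Import reals.
From mathcomp Require Import complex.
Import Order.TTheory GRing.Theory Num.Theory.
Local Open Scope ring_scope.
Local Open Scope complex_scope.

(* Since [x^2 = 1/f(x) + 1], the preimages of [y] under [f] are exactly
   [h_+(y)] and [h_-(y)], and [f (h_(+/-) y) = y].  Hence the backward orbits
   of [1] are the words, and [f] peels off the leading letter of a word.
   A letter [h(y)] squares to [1/y + 1], which is neither [0] nor [1] as long
   as [y] is not [-1] or [0]; by induction no word is [0], [1] or [-1].
   The two letters differ at such [y], so peeling letters one at a time shows
   that words are determined by their values. *)

Section Letters.
Variable R : realType.
Implicit Types (x y : R[i]) (b : bool) (w : seq bool).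

Lemma sqr_hlet b y : hlet b y ^+ 2 = y^-1 + 1.
Proof. by case: b; rewrite /= /hp /hm ?sqrrN sqr_sqrtc. Qed.

Lemma fmap_hlet b y : fmap (hlet b y) = y.
Proof. by rewrite /fmap sqr_hlet addrK invrK. Qed.

Lemma sqr_fmapV x : x ^+ 2 = (fmap x)^-1 + 1.
Proof. by rewrite /fmap invrK subrK. Qed.

Lemma hlet_fmap x : exists b, x = hlet b (fmap x).
Proof.
have /eqP := sqr_fmapV x; rewrite -(sqr_sqrtc ((fmap x)^-1 + 1)) eqf_sqr.
by case/orP=> /eqP xE; [exists true | exists false].
Qed.

Lemma is_poleE x : is_pole x <-> x ^+ 2 = 1.
Proof.
split=> [[-> | ->] | /eqP]; rewrite ?sqrrN ?expr1n //.
by rewrite -(expr1n _ 2) eqf_sqr => /orP[] /eqP; [left | right].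
Qed.

Lemma fmap_eq0 x : fmap x = 0 <-> is_pole x.
Proof.
rewrite is_poleE /fmap; split => [/eqP | ->]; last by rewrite subrr invr0.
by rewrite invr_eq0 subr_eq0 => /eqP.
Qed.

Lemma fmap_eqN1 x : fmap x = -1 <-> x = 0.
Proof.
split=> [fxN1 | ->]; last by rewrite /fmap expr0n sub0r invrN1.
by apply/eqP; rewrite -sqrf_eq0 sqr_fmapV fxN1 invrN1 addNr.
Qed.

Lemma hlet_eq0 b y : y != -1 -> hlet b y != 0.
Proof.
move=> yN1; rewrite -sqrf_eq0 /= sqr_hlet addr_eq0.
by apply: contra yN1 => /eqP/(congr1 GRing.inv); rewrite invrK invrN1 => ->.
Qed.

Lemma hlet_sqr_eq1 b y : hlet b y ^+ 2 = 1 -> y = 0.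
Proof. by rewrite sqr_hlet => /eqP; rewrite -subr_eq0 addrK invr_eq0 => /eqP. Qed.

(* the two letters can only agree where [sqrtc (1/y + 1) = 0] *)
Lemma hlet_inj y : y != -1 -> injective (fun b => hlet b y).
Proof.
move=> yN1 b c; have /negPf sqrt_neq0 := hlet_eq0 true y yN1.
case: b c => [] [] //= /eqP; rewrite /hp /hm; last rewrite eq_sym;
  by rewrite -addr_eq0 -mulr2n mulrn_eq0 sqrt_neq0.
Qed.

Lemma word_cons b w : word R (b :: w) = hlet b (word R w).
Proof. by []. Qed.

Lemma word_neq0_neqN1 w : word R w != 0 /\ word R w != -1.
Proof.
elim: w => [|b w [w0 wN1]]; first by rewrite /= oner_eq0 -addr_eq0 -mulr2n pnatr_eq0.
rewrite word_cons hlet_eq0 //; split=> //.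
apply/eqP=> /(congr1 (fun z => z ^+ 2)); rewrite sqrrN expr1n.
by move/hlet_sqr_eq1/eqP; rewrite (negPf w0).
Qed.

Lemma word_not_pole b w : ~ is_pole (word R (b :: w)).
Proof.
rewrite is_poleE word_cons => /hlet_sqr_eq1/eqP.
by case: (word_neq0_neqN1 w) => /negPf ->.
Qed.

Lemma iter_fmap_word k w : (k <= size w)%N ->
  iter k (@fmap R) (word R w) = word R (drop k w).
Proof. by elim: k w => [|k IHk] [|b w] // ?; rewrite iterSr fmap_hlet IHk. Qed.

Lemma defined_upto_word w : defined_upto (word R w) (size w).
Proof.
move=> k ltkw; rewrite iter_fmap_word ?(ltnW ltkw) // (drop_nth false ltkw).
exact: word_not_pole.
Qed.

Lemma iter_fmap_size_word w : iter (size w) (@fmap R) (word R w) = 1.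
Proof. by rewrite iter_fmap_word // drop_size. Qed.

Lemma iter_fmap_eq1 m x : iter m (@fmap R) x = 1 -> exists2 w, size w = m & x = word R w.
Proof.
elim: m x => [|m IHm] x; first by exists [::].
rewrite iterSr => /IHm[w <- fxw]; have [b ->] := hlet_fmap x.
by exists (b :: w); rewrite // word_cons fxw.
Qed.

Lemma word_inj : injective (word R).
Proof.
elim=> [|b v IHv] [|c w] //; rewrite ?word_cons => vw.
- by case: (word_not_pole c w); left.
- by case: (word_not_pole b v); left.
have vw' : v = w by apply: IHv; rewrite -(fmap_hlet b (word R v)) vw fmap_hlet.
subst w; congr (_ :: _).
exact: (hlet_inj _ (proj2 (word_neq0_neqN1 v)) _ _ vw).
Qed.

Lemma iter_fmap_eqN1 n x : defined_upto x n -> iter n (@fmap R) x = -1 -> x = -1 \/ x = 0.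
Proof.
case: n => [_ | n dxn]; first by left.
rewrite iterS => /fmap_eqN1; case: n dxn => [_ | n dxn]; first by right.
by rewrite iterS => /fmap_eq0 pole; case: (dxn n (leqnSn n.+1) pole).
Qed.

End Letters.

Theorem mainTheorem1 (R : realType) :
  (* (i) *)
  ((forall x : R[i], ~ is_pole x -> (fmap x = -1 <-> x = 0)) /\
   (forall x : R[i], ~ is_pole x -> fmap x <> 0)) /\
  (* (ii) *)
  (forall x : R[i],
     (exists m : nat, (1 <= m)%N /\ defined_upto x m /\ iter m (@fmap R) x = 1)
     <-> (exists w : seq bool, (1 <= size w)%N /\ x = word R w)) /\
  (* (iii) *)
  (forall w : seq bool, (1 <= size w)%N ->
     forall k : nat, (k < size w)%N -> word R (drop k w) <> 0) /\
  (* (iv) *)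
  (forall v w : seq bool, (1 <= size v)%N -> (1 <= size w)%N ->
     word R v = word R w -> v = w) /\
  (* consequence: the forbidden set *)
  (forall x : R[i], forbidden x <->
     (x = -1 \/ x = 0 \/ x = 1 \/
      exists w : seq bool, (1 <= size w)%N /\ x = word R w)).
Proof.
have backward_orbit1 (x : R[i]) :
    (exists m, (1 <= m)%N /\ defined_upto x m /\ iter m (@fmap R) x = 1) <->
    (exists w, (1 <= size w)%N /\ x = word R w).
  split=> [[m [m1 [_ /iter_fmap_eq1[w wm ->]]]] | [w [w1 ->]]]; first by exists w; rewrite wm.
  by exists (size w); split; [|split; [exact: defined_upto_word | exact: iter_fmap_size_word]].
split; first by split=> x np; [exact: fmap_eqN1 | move/fmap_eq0].
split=> //; split; first by move=> w _ k _ /eqP; case: (word_neq0_neqN1 R (drop k w)) => /negPf ->.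
split; first by move=> v w _ _; apply: word_inj.
move=> x; split=> [[[|n] [dxn [xn1 | xnN1]]] | ].
- by right; right; left.
- by left.
- by right; right; right; apply/backward_orbit1; exists n.+1.
- by case: (@iter_fmap_eqN1 R _ x dxn xnN1) => ->; [left | right; left].
case=> [-> | [-> | [-> | /backward_orbit1[m [_ [dxm xm1]]]]]].
- by exists 0%N; split; [|right].
- exists 1%N; split; last by right; apply/fmap_eqN1.
  move=> k; rewrite ltnS leqn0 => /eqP -> /is_poleE /=.
  by rewrite expr0n => /eqP; rewrite eq_sym oner_eq0.
- by exists 0%N; split; [|left].
- by exists m; split; [|left].
Qed.
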